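(* Let $S_0,S_1,S_2$ be pair-partitions of $[2k]$, $\lambda$ a Young diagram, and $f:[2k]\to 2\lambda$ a function with $f(i)=f(j)$ for some $i\neq j$. Let $S_0'=(i\ j)\cdot S_0$. Then (a) $f$ satisfies conditions (P0), (P1), (P2) with respect to $(S_0,S_1,S_2)$ if and only if it satisfies them with respect to $(S_0',S_1,S_2)$; (b) if these conditions are satisfied, then $(-1)^{\mathcal{L}(S_0,S_1)}+(-1)^{\mathcal{L}(S_0',S_1)}=0$.
   Context: Pair-partitions of $[2k]$ are sets of disjoint two-element subsets with union $[2k]$, identified with fixed-point-free involutions; for a permutation $\sigma$, $\sigma\cdot P$ has pair $\{\sigma(a),\sigma(b)\}$ iff $\{a,b\}\in P$, and $(i\ j)$ is the transposition. $\mathcal{L}(A,B)$ is the bipartite graph with a black vertex per pair of $A$, a white vertex per pair of $B$, and an edge for each $a\in[2k]$ joining the pairs containing $a$; it is a union of loops, $|\mathcal{L}(A,B)|$ is the number of loops and $(-1)^{\mathcal{L}(A,B)}=(-1)^{k-|\mathcal{L}(A,B)|}$. $2\lambda=(2\lambda_1,2\lambda_2,\dots)$; two boxes of $2\lambda$ are neighbors if in the same row and in columns $2m+1$, $2m+2$ for some $m\ge0$. The conditions, for all $l\in[2k]$: (P0) $f(l)$ and $f(S_0(l))$ are neighbors; (P1) $f(l)$ and $f(S_0\circ S_1(l))$ are in the same column; (P2) $f(l)$ and $f(S_2(l))$ are in the same row. *)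

From mathcomp Require Import all_boot all_order all_algebra all_fingroup.
Set Implicit Arguments. Unset Strict Implicit. Unset Printing Implicit Defensive.

(* Pair-partitions of [2k] = 'I_(2*k), identified with fixed-point-free involutions. *)
Definition is_pairing (k : nat) (P : {perm 'I_(2 * k)}) : bool :=
  [forall x, (P x != x) && (P (P x) == x)].

(* Action sigma . P = sigma o P o sigma^{-1}: pair {sigma a, sigma b} iff {a,b} in P.
   In mathcomp (s * t) x = t (s x), so sigma o P o sigma^-1 = sigma^-1 * P * sigma. *)
Definition pp_act (k : nat) (sigma P : {perm 'I_(2 * k)}) : {perm 'I_(2 * k)} :=
  (sigma^-1 * P * sigma)%g.

(* The graph L(A,B): black vertices = pairs of A, white = pairs of B, one edge per
   a in [2k] joining the A-pair and the B-pair containing a.  Two edges a, b share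
   an endpoint iff b = A a (same black vertex) or b = B a (same white vertex).
   Every vertex has degree 2, so loops = connected components, counted here as the
   connected classes of edges. *)
Definition edge_adj (k : nat) (A B : {perm 'I_(2 * k)}) : rel 'I_(2 * k) :=
  fun a b => (b == A a) || (b == B a).

Definition nloops (k : nat) (A B : {perm 'I_(2 * k)}) : nat :=
  n_comp (edge_adj A B) predT.

Definition loop_sign (k : nat) (A B : {perm 'I_(2 * k)}) : int :=
  ((-1) ^+ (k - nloops A B))%R.

Definition young (lam : seq nat) : bool :=
  sorted geq lam && all (fun r => 0 < r) lam.

(* Boxes of 2*lambda, 0-indexed (row, column): row r < #rows, column c < 2*lam_r. *)
Definition in_double (lam : seq nat) (b : nat * nat) : bool :=
  (b.1 < size lam) && (b.2 < 2 * nth 0 lam b.1).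

(* Neighbours: same row, columns 2m+1, 2m+2 (1-indexed) = 2m, 2m+1 (0-indexed). *)
Definition neighbors (b c : nat * nat) : bool :=
  (b.1 == c.1) && (b.2./2 == c.2./2) && (b.2 != c.2).

Definition condP0 (k : nat) (f : 'I_(2 * k) -> nat * nat) (S0 : {perm 'I_(2 * k)}) :=
  forall l, neighbors (f l) (f (S0 l)).
Definition condP1 (k : nat) (f : 'I_(2 * k) -> nat * nat) (S0 S1 : {perm 'I_(2 * k)}) :=
  forall l, (f l).2 = (f (S0 (S1 l))).2.
Definition condP2 (k : nat) (f : 'I_(2 * k) -> nat * nat) (S2 : {perm 'I_(2 * k)}) :=
  forall l, (f l).1 = (f (S2 l)).1.

Definition conds (k : nat) (f : 'I_(2 * k) -> nat * nat) (S0 S1 S2 : {perm 'I_(2 * k)}) :=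
  [/\ condP0 f S0, condP1 f S0 S1 & condP2 f S2].

From mathcomp Require Import all_boot all_order all_algebra all_fingroup.
Set Implicit Arguments. Unset Strict Implicit. Unset Printing Implicit Defensive.
Import GRing.Theory.

(* Colour each element l by the parity of the column of f l.  Under (P0) and (P1)
   both S0 and S1 swap the two colour classes, so every loop of L(S0,S1) alternates
   between them, and on one class E the map S1 o S0 (extended by the identity off E)
   is a permutation whose cycles are the loops.  It thus has |L| + k cycles on 2k
   points, so its signature is (-1)^(k - |L|) = (-1)^L(S0,S1).  Since f i = f j,
   both i and j have the colour of E, and replacing S0 by (i j).S0 multiplies this
   permutation by the transposition (i j), which flips the sign.  Part (a) holds
   because f is (i j)-invariant and a box has a unique neighbour. *)

Local Open Scope group_scope.

Lemma porbit_mem_perm (T : finType) (s : {perm T}) x y :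
  (s y \in porbit s x) = (y \in porbit s x).
Proof.
have := porbit_perm s 1 y; rewrite expg1 => porbit_sy.
by rewrite porbit_sym porbit_sy porbit_sym.
Qed.

Section LoopWalk.
Variable k : nat.
Local Notation T := 'I_(2 * k).
Variables (A B : {perm T}) (E : {set T}).
Hypothesis A_swap : forall x, (A x \in E) = (x \notin E).
Hypothesis B_swap : forall x, (B x \in E) = (x \notin E).
Hypothesis A_inv : involutive A.
Hypothesis B_inv : involutive B.

Definition loop_walk_fun x := if x \in E then B (A x) else x.

Lemma mem_loop_walk_fun x : (loop_walk_fun x \in E) = (x \in E).
Proof. by rewrite /loop_walk_fun; case: ifP => // xE; rewrite B_swap A_swap xE. Qed.

Lemma loop_walk_fun_inj : injective loop_walk_fun.
Proof.
move=> x y eq_xy; have := mem_loop_walk_fun x.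
rewrite eq_xy mem_loop_walk_fun => Exy.
by move: eq_xy; rewrite /loop_walk_fun -Exy; case: ifP => // _ /perm_inj/perm_inj.
Qed.

Definition loop_walk : {perm T} := perm loop_walk_fun_inj.

Lemma loop_walkE x : loop_walk x = loop_walk_fun x.
Proof. by rewrite permE. Qed.

Local Notation adj := (edge_adj A B).

Lemma edge_adj_sym : symmetric adj.
Proof.
have inv_eq (P : {perm T}) x y : involutive P -> (y == P x) = (x == P y).
  by move=> PK; apply/eqP/eqP => ->.
by move=> x y; rewrite /edge_adj (inv_eq A) // (inv_eq B).
Qed.

Lemma edge_adj_connect_sym : connect_sym adj.
Proof. exact: sym_connect_sym edge_adj_sym. Qed.

Lemma porbit_loop_walk_in x :
  x \in E -> porbit loop_walk x = [set y in E | connect adj x y].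
Proof.
move=> xE; apply/setP => y; rewrite inE; apply/idP/idP.
  case/porbitP => n ->; elim: n => [|n /andP[IH_E IH_conn]].
    by rewrite expg0 perm1 xE connect0.
  rewrite expgSr permM loop_walkE /loop_walk_fun IH_E B_swap A_swap IH_E /=.
  set z := (loop_walk ^+ n) x.
  have adjA : adj z (A z) by rewrite /edge_adj eqxx.
  have adjB : adj (A z) (B (A z)) by rewrite /edge_adj eqxx orbT.
  exact: connect_trans IH_conn (connect_trans (connect1 adjA) (connect1 adjB)).
case/andP => yE conn_xy.
(* an element off E is represented in the orbit by its A-partner *)
pose P := [pred z | if z \in E then z \in porbit loop_walk x
                    else A z \in porbit loop_walk x].
have closedP : closed adj P.
  apply: (intro_closed edge_adj_connect_sym) => z w; rewrite /edge_adj /P inE.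
  case/orP => /eqP ->; case zE: (z \in E) => Pz; rewrite inE /=.
  - by rewrite A_swap zE A_inv.
  - by rewrite A_swap zE.
  - rewrite B_swap zE /= -(porbit_mem_perm loop_walk) loop_walkE /loop_walk_fun.
    by rewrite A_swap B_swap zE /= A_inv B_inv.
  - rewrite B_swap zE /=.
    have -> : B z = loop_walk (A z) by rewrite loop_walkE /loop_walk_fun A_swap zE A_inv.
    by rewrite porbit_mem_perm.
by have := closed_connect closedP conn_xy; rewrite /P !inE xE yE porbit_id => <-.
Qed.

Lemma porbit_loop_walk_out x : x \notin E -> porbit loop_walk x = [set x].
Proof.
move=> xE; apply/setP => y; rewrite inE; apply/porbitP/eqP => [[n ->]|->].
  elim: n => [|n IH]; first by rewrite expg0 perm1.
  by rewrite expgSr permM IH loop_walkE /loop_walk_fun (negbTE xE).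
by exists 0; rewrite expg0 perm1.
Qed.

Definition loop_class x := [set y | connect adj x y].

Lemma loop_class_eq x y : connect adj x y -> loop_class x = loop_class y.
Proof.
move=> conn_xy; apply/setP => z; rewrite !inE; apply/idP/idP => [conn_xz|].
  by apply: connect_trans conn_xz; rewrite edge_adj_connect_sym.
exact: connect_trans.
Qed.

Lemma exists_connect_mem x : exists2 x', x' \in E & connect adj x x'.
Proof.
case xE: (x \in E); first by exists x => //; apply: connect0.
by exists (A x); rewrite ?A_swap ?xE // connect1 // /edge_adj eqxx.
Qed.

Lemma card_loop_classes : #|[set loop_class x | x : T]| = nloops A B.
Proof.
rewrite /nloops /n_comp_mem.
have -> : [set loop_class x | x : T] = loop_class @: [set x | roots adj x].
  apply/setP => C; apply/imsetP/imsetP => [[x _ ->]|[x _ ->]]; last by exists x.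
  exists (fingraph.root adj x).
    by rewrite inE roots_root //; exact: edge_adj_connect_sym.
  exact/loop_class_eq/connect_root.
rewrite card_in_imset; first by apply: eq_card => x; rewrite !inE andbT.
move=> r1 r2; rewrite !inE => /eqP r1_root /eqP r2_root eq_cls.
have : r2 \in loop_class r1 by rewrite eq_cls inE connect0.
by rewrite inE => /(fingraph.rootP edge_adj_connect_sym); rewrite r1_root r2_root.
Qed.

Lemma card_porbits_loop_walk_in : #|porbit loop_walk @: E| = nloops A B.
Proof.
have -> : porbit loop_walk @: E =
          (fun C => C :&: E) @: [set loop_class x | x : T].
  apply/setP => O; apply/imsetP/imsetP.
  - case=> x xE ->; exists (loop_class x); first exact: imset_f.
    by rewrite porbit_loop_walk_in //; apply/setP => y; rewrite !inE andbC.
  - case=> _ /imsetP[x _ ->] ->; have [x' x'E conn_xx'] := exists_connect_mem x.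
    exists x' => //; rewrite porbit_loop_walk_in // (loop_class_eq conn_xx').
    by apply/setP => y; rewrite !inE andbC.
rewrite card_in_imset ?card_loop_classes //.
move=> _ _ /imsetP[x _ ->] /imsetP[y _ ->] eq_traces.
have [x' x'E conn_xx'] := exists_connect_mem x.
have : x' \in loop_class x :&: E by rewrite !inE conn_xx' x'E.
rewrite eq_traces !inE x'E andbT => conn_yx'.
by rewrite (loop_class_eq conn_xx') (loop_class_eq conn_yx').
Qed.

Lemma card_porbits_loop_walk : #|porbits loop_walk| = nloops A B + #|~: E|.
Proof.
have -> : porbits loop_walk = porbit loop_walk @: (E :|: ~: E).
  by rewrite setUCr /porbits; apply/setP => O; apply/imsetP/imsetP => -[x _ ->]; exists x.
rewrite imsetU cardsU card_porbits_loop_walk_in.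
rewrite [#|_ @: ~: E|]card_in_imset => [|x y]; last first.
  by rewrite !inE => xE yE; rewrite !porbit_loop_walk_out // => /set1_inj.
suff -> : (porbit loop_walk @: E) :&: (porbit loop_walk @: ~: E) = set0.
  by rewrite cards0 subn0.
apply/setP => O; rewrite !inE; apply/negbTE/andP => -[/imsetP[x xE ->]].
case/imsetP => y; rewrite inE => yE; rewrite [porbit _ y]porbit_loop_walk_out //.
move=> eq_orbits; have := porbit_id loop_walk x.
by rewrite eq_orbits inE => /eqP eq_xy; rewrite -eq_xy xE in yE.
Qed.

Lemma card_swapped_set : #|~: E| = k.
Proof.
have AE : A @: E = ~: E.
  apply/setP => y; rewrite inE; apply/imsetP/idP => [[x xE ->]|yE].
    by rewrite A_swap xE.
  by exists (A y); rewrite ?A_swap ?A_inv.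
have := cardsC E; rewrite -AE card_imset ?card_ord; last exact: perm_inj.
by rewrite addnn -mul2n => /eqP; rewrite eqn_mul2l /= => /eqP.
Qed.

Lemma loop_signE : loop_sign A B = ((-1) ^+ odd_perm loop_walk)%R.
Proof.
have card_orbits := card_porbits_loop_walk; rewrite card_swapped_set in card_orbits.
have nloops_le : nloops A B <= k.
  have := leq_imset_card (porbit loop_walk) (mem T).
  by rewrite -/(porbits _) card_orbits card_ord mul2n -addnn leq_add2r.
rewrite /loop_sign -signr_odd oddB // /odd_perm card_ord card_orbits oddD.
by rewrite oddM /= addbC.
Qed.

End LoopWalk.

Lemma pairing_involutive k (P : {perm 'I_(2 * k)}) : is_pairing P -> involutive P.
Proof. by move=> /forallP pairP x; case/andP: (pairP x) => _ /eqP. Qed.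

Lemma pp_actE k (s P : {perm 'I_(2 * k)}) x : pp_act s P x = s (P (s^-1 x)).
Proof. by rewrite /pp_act !permM. Qed.

Lemma pp_act_tpermK k (i j : 'I_(2 * k)) : involutive (pp_act (tperm i j)).
Proof. by move=> P; apply/permP => x; rewrite !pp_actE tpermV !tpermK. Qed.

Lemma pp_act_involutive k (s P : {perm 'I_(2 * k)}) :
  involutive P -> involutive (pp_act s P).
Proof. by move=> PK x; rewrite !pp_actE permK PK permKV. Qed.

Lemma loop_walk_pp_act_tperm k (A B : {perm 'I_(2 * k)}) (E : {set 'I_(2 * k)}) i j
    (A_swap : forall x, (A x \in E) = (x \notin E))
    (A'_swap : forall x, (pp_act (tperm i j) A x \in E) = (x \notin E))
    (B_swap : forall x, (B x \in E) = (x \notin E)) :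
  i \in E -> j \in E -> loop_walk A'_swap B_swap = tperm i j * loop_walk A_swap B_swap.
Proof.
move=> iE jE; apply/permP => x; rewrite permM !loop_walkE /loop_walk_fun.
have tperm_notin y : y \notin E -> tperm i j y = y.
  by move=> yE; apply: tpermD; apply: contraNneq yE => <-.
have mem_tperm : (tperm i j x \in E) = (x \in E).
  by case: tpermP => [->|->|_ _] //; rewrite iE jE.
rewrite mem_tperm pp_actE tpermV; case: ifP => [xE|/negbT/tperm_notin -> //].
by rewrite tperm_notin // A_swap mem_tperm xE.
Qed.

Lemma half_odd_inj m n : m./2 = n./2 -> odd m = odd n -> m = n.
Proof.
by move=> eq_half eq_odd; rewrite -[m]odd_double_half -[n]odd_double_half eq_half eq_odd.
Qed.

Lemma neighbors_odd b c : neighbors b c -> odd c.2 = ~~ odd b.2.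
Proof.
case/andP => /andP[_ /eqP eq_half]; apply: contraNeq => odd_neq.
by apply/eqP/half_odd_inj; move: odd_neq; case: (odd b.2); case: (odd c.2).
Qed.

Lemma neighbors_uniq b c d : neighbors b c -> neighbors b d -> c = d.
Proof.
move=> bc bd; have eq_odd : odd c.2 = odd d.2.
  by rewrite (neighbors_odd bc) (neighbors_odd bd).
case/andP: bc => /andP[/eqP bc1 /eqP bc2] _; case/andP: bd => /andP[/eqP bd1 /eqP bd2] _.
case: c d bc1 bc2 bd1 bd2 eq_odd => [c1 c2] [d1 d2] /= <- bc2 <- bd2 eq_odd.
by rewrite (@half_odd_inj c2 d2) // -bc2 -bd2.
Qed.

Section Transposition.
Variables (k : nat) (f : 'I_(2 * k) -> nat * nat) (i j : 'I_(2 * k)).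
Hypothesis f_ij : f i = f j.

Lemma tperm_invariant x : f (tperm i j x) = f x.
Proof. by case: tpermP => // ->. Qed.

Lemma conds_pp_act_tperm S0 S1 S2 :
  conds f S0 S1 S2 -> conds f (pp_act (tperm i j) S0) S1 S2.
Proof.
move=> [P0 P1 P2].
have P0' x : neighbors (f x) (f (pp_act (tperm i j) S0 x)).
  by rewrite pp_actE tpermV tperm_invariant -[f x]tperm_invariant.
have same_box x : f (pp_act (tperm i j) S0 x) = f (S0 x) := neighbors_uniq (P0' x) (P0 x).
by split=> // l; rewrite same_box.
Qed.

End Transposition.

Lemma condP1_odd k (f : 'I_(2 * k) -> nat * nat) S0 S1 :
  condP0 f S0 -> condP1 f S0 S1 -> involutive S1 ->
  forall x, odd (f (S1 x)).2 = ~~ odd (f x).2.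
Proof. by move=> P0 P1 S1K x; rewrite P1 S1K (neighbors_odd (P0 x)). Qed.

Theorem lemma3p8 (k : nat) (S0 S1 S2 : {perm 'I_(2 * k)}) (lam : seq nat)
    (f : 'I_(2 * k) -> nat * nat) (i j : 'I_(2 * k)) :
  is_pairing S0 -> is_pairing S1 -> is_pairing S2 -> young lam ->
  (forall l, in_double lam (f l)) ->
  i != j -> f i = f j ->
  (conds f S0 S1 S2 <-> conds f (pp_act (tperm i j) S0) S1 S2) /\
  (conds f S0 S1 S2 ->
     (loop_sign S0 S1 + loop_sign (pp_act (tperm i j) S0) S1 = 0)%R).
Proof.
move=> /pairing_involutive S0K /pairing_involutive S1K _ _ _ neq_ij f_ij.
have conds_tperm := conds_pp_act_tperm f_ij.
split.
  split=> [|/conds_tperm]; first exact: conds_tperm.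
  by rewrite pp_act_tpermK.
move=> condsS0; have [P0' _ _] := conds_tperm _ _ _ condsS0; case: condsS0 => P0 P1 _.
pose E := [set x | odd (f x).2 == odd (f i).2].
have swapE (P : {perm 'I_(2 * k)}) :
    (forall x, odd (f (P x)).2 = ~~ odd (f x).2) -> forall x, (P x \in E) = (x \notin E).
  by move=> P_odd x; rewrite !inE P_odd; case: (odd (f x).2); case: (odd (f i).2).
have S0_swap := swapE _ (fun x => neighbors_odd (P0 x)).
have S0'_swap := swapE _ (fun x => neighbors_odd (P0' x)).
have S1_swap := swapE _ (condP1_odd P0 P1 S1K).
have iE : i \in E by rewrite inE.
have jE : j \in E by rewrite inE f_ij.
rewrite (loop_signE S0_swap S1_swap S0K S1K).
rewrite (loop_signE S0'_swap S1_swap (pp_act_involutive _ S0K) S1K).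
by rewrite (loop_walk_pp_act_tperm S0_swap) // odd_mul_tperm neq_ij signrN addrN.
Qed.
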